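(* Let $\Omega\subset\mathbb{R}^d$ be a bounded domain, $\kappa$ a positive coefficient on $\Omega$, and $a(u,v)=\int_\Omega \kappa\nabla u\cdot\nabla v$. Let $V_{1,H},V_{2,H}$ be finite-dimensional real vector spaces and, for $j=1,2$, let $T_{j,0},T_{j,1}$ be linear maps from $V_{j,H}$ into a space of functions on which $a(\cdot,\cdot)$ and the $L^2(\Omega)$ inner product $(\cdot,\cdot)$ are defined; put $T_j=T_{j,0}+T_{j,1}$. For $i,j\in\{1,2\}$, $U\in V_{j,H}$, $W\in V_{i,H}$ define $$m_{ij}(U,W)=(T_jU,T_iW),\quad a_{ij}(U,W)=a(T_{j,1}U,T_{i,1}W),\quad c_{ij}(U,W)=a(T_{j,0}U,T_{i,0}W),$$ and for $W_1\in V_{1,H}$, $W_2\in V_{2,H}$, $$\|(W_1,W_2)\|_m^2=\sum_{i,j=1}^2 m_{ij}(W_j,W_i),\quad \|(W_1,W_2)\|_a^2=\sum_{i,j=1}^2 a_{ij}(W_j,W_i),\quad \|(W_1,W_2)\|_c^2=\sum_{i,j=1}^2 c_{ij}(W_j,W_i),$$ and $\|W\|_{a_{22}}^2=a_{22}(W,W)$ for $W\in V_{2,H}$. Let $\tau>0$ and let sequences $U_1^n\in V_{1,H}$, $U_2^n\in V_{2,H}$ ($n\ge 0$) satisfy, for every $n\ge1$, the scheme (discretization scheme 1 with zero source) $$\tfrac{1}{\tau^2} m_{11}(U_1^{n+1}-2U_1^n+U_1^{n-1},W_1)+\tfrac{1}{\tau^2} m_{12}(U_2^{n+1}-2U_2^n+U_2^{n-1},W_1)+\tfrac12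 a_{11}(U_1^{n+1}+U_1^{n-1},W_1)+a_{12}(U_2^n,W_1)+\tfrac12 c_{11}(U_1^{n+1}+U_1^{n-1},W_1)+\tfrac12 c_{12}(U_2^{n+1}+U_2^{n-1},W_1)=0$$ for all $W_1\in V_{1,H}$, and $$\tfrac{1}{\tau^2} m_{22}(U_2^{n+1}-2U_2^n+U_2^{n-1},W_2)+\tfrac{1}{\tau^2} m_{21}(U_1^{n+1}-2U_1^n+U_1^{n-1},W_2)+a_{21}(U_1^n,W_2)+a_{22}(U_2^n,W_2)+\tfrac12 c_{21}(U_1^{n+1}+U_1^{n-1},W_2)+\tfrac12 c_{22}(U_2^{n+1}+U_2^{n-1},W_2)=0$$ for all $W_2\in V_{2,H}$. Define $$E^{n+\frac12}=\tfrac{2}{\tau^2}\|(U_1^{n+1}-U_1^n,U_2^{n+1}-U_2^n)\|_m^2+\|(U_1^{n+1},U_2^{n+1})\|_c^2+\|(U_1^n,U_2^n)\|_c^2+\|(U_1^{n+1},U_2^n)\|_a^2+\|(U_1^n,U_2^{n+1})\|_a^2-\|U_2^{n+1}-U_2^n\|_{a_{22}}^2.$$ Then $E^{n+\frac12}=E^{n-\frac12}$ for every $n\ge1$.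
   Context: This is the paper's setting of a multicontinuum spatial discretization of the wave equation $\partial_{tt}u-\nabla\cdot(\kappa\nabla u)=f$ with zero Dirichlet data: $V_{j,H}=\prod_{k\in I_j}V_H$ where $V_H$ is a coarse finite element space and $I_1\sqcup I_2=\{1,\dots,N\}$ is a partition of the continua indices; $T_{j,0}((U_k)_{k\in I_j})=\sum_{K}\mathbf{1}_K\sum_{k\in I_j}\phi_k^K U_k$ and $T_{j,1}((U_k)_{k\in I_j})=\sum_K \mathbf{1}_K\sum_{k\in I_j}\sum_{m=1}^d\phi_k^{K,m}\partial_{x_m}U_k$, the sums over coarse blocks $K$, with fixed multiscale basis functions $\phi_k^K,\phi_k^{K,m}$ (obtained in the paper from local constrained energy-minimization cell problems). The source term is taken to be zero ($f_1=f_2=0$), as the paper assumes for the energy analysis. *)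

From HB Require Import structures.
From mathcomp Require Import all_boot all_order all_algebra.
Set Implicit Arguments. Unset Strict Implicit. Unset Printing Implicit Defensive.
Import Order.TTheory GRing.Theory Num.Theory.
Local Open Scope ring_scope.

(* A symmetric bilinear form on a real vector space F
   (abstracts a(u,v) = int kappa grad u . grad v and the L^2 product). *)
Definition sym_bilinear (R : ringType) (F : lmodType R) (b : F -> F -> R) :=
  (forall u v, b u v = b v u) /\
  (forall (c : R) u v w, b (c *: u + v) w = c * b u w + b v w).

(* Nonnegativity (a is positive semidefinite since kappa > 0,
   the L^2 product is positive definite). *)
Definition psd (R : numDomainType) (F : lmodType R) (b : F -> F -> R) :=
  forall u, 0 <= b u u.

Definition Tsum (R : ringType) (V F : lmodType R) (T0 T1 : V -> F) : V -> F :=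
  fun U => T0 U + T1 U.

Definition pform (R : ringType) (Vj Vi F : lmodType R) (b : F -> F -> R)
  (Sj : Vj -> F) (Si : Vi -> F) (U : Vj) (W : Vi) : R := b (Sj U) (Si W).

Definition pnorm2 (R : ringType) (V1 V2 F : lmodType R) (b : F -> F -> R)
  (S1 : V1 -> F) (S2 : V2 -> F) (W1 : V1) (W2 : V2) : R :=
  pform b S1 S1 W1 W1 + pform b S2 S1 W2 W1 +
  pform b S1 S2 W1 W2 + pform b S2 S2 W2 W2.

Definition energy (R : fieldType) (V1 V2 F : lmodType R)
  (a l2 : F -> F -> R) (T10 T11 : V1 -> F) (T20 T21 : V2 -> F) (tau : R)
  (U1 : nat -> V1) (U2 : nat -> V2) (n : nat) : R :=
  let T1 := Tsum T10 T11 in let T2 := Tsum T20 T21 in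
  2 / tau ^+ 2 * pnorm2 l2 T1 T2 (U1 n.+1 - U1 n) (U2 n.+1 - U2 n)
  + pnorm2 a T10 T20 (U1 n.+1) (U2 n.+1)
  + pnorm2 a T10 T20 (U1 n) (U2 n)
  + pnorm2 a T11 T21 (U1 n.+1) (U2 n)
  + pnorm2 a T11 T21 (U1 n) (U2 n.+1)
  - pform a T21 T21 (U2 n.+1 - U2 n) (U2 n.+1 - U2 n).

From HB Require Import structures.
From mathcomp Require Import all_boot all_order all_algebra.
From mathcomp Require Import ring.
Set Implicit Arguments.
Unset Strict Implicit.
Unset Printing Implicit Defensive.
Import Order.TTheory GRing.Theory Num.Theory.
Local Open Scope ring_scope.

(* Test the two equations of the scheme with W_j = U_j^{n+1} - U_j^{n-1} and
   add them.  Everything then lives in F, through x = T_1 U_1 + T_2 U_2,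
   y = T_{1,0} U_1 + T_{2,0} U_2, p = T_{1,1} U_1 and q = T_{2,1} U_2.  The
   mass and c-terms are differences of squares of symmetric forms,
   b(u + v, u - v) = b(u, u) - b(v, v), and the implicit a_11-term is one as
   well; the explicit couplings a_12, a_21, a_22 telescope thanks to the
   correction -||U_2^{n+1} - U_2^n||_{a_22}^2 in the energy.  So
   E^{n+1/2} - E^{n-1/2} is twice the tested sum, which vanishes. *)

Section SymBilinear.
Variables (R : comNzRingType) (F : lmodType R) (b : F -> F -> R).
Hypothesis bS : sym_bilinear b.

Lemma bilinC u v : b u v = b v u. Proof. by case: bS. Qed.

Lemma bilinDl u v w : b (u + v) w = b u w + b v w.
Proof. by have [_ lin] := bS; rewrite -{1}[u]scale1r lin mul1r. Qed.

Lemma bilin0l w : b 0 w = 0.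
Proof. by apply: (addrI (b 0 w)); rewrite -bilinDl !addr0. Qed.

Lemma bilinZl c u w : b (c *: u) w = c * b u w.
Proof. by have [_ lin] := bS; rewrite -[c *: u]addr0 lin bilin0l addr0. Qed.

Lemma bilinNl u w : b (- u) w = - b u w.
Proof. by rewrite -scaleN1r bilinZl mulN1r. Qed.

Lemma bilinBl u v w : b (u - v) w = b u w - b v w.
Proof. by rewrite bilinDl bilinNl. Qed.

Lemma bilinDr u v w : b w (u + v) = b w u + b w v.
Proof. by rewrite bilinC bilinDl !(bilinC w). Qed.

Lemma bilinBr u v w : b w (u - v) = b w u - b w v.
Proof. by rewrite bilinC bilinBl !(bilinC w). Qed.

Lemma bilin_polar u v : b (u + v) (u - v) = b u u - b v v.
Proof. by rewrite bilinDl !bilinBr (bilinC v u); ring. Qed.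

Lemma bilin_sqrD u v : b (u + v) (u + v) = b u u + 2 * b u v + b v v.
Proof. by rewrite bilinDl !bilinDr (bilinC v u); ring. Qed.

Lemma bilin_sqrB u v : b (u - v) (u - v) = b u u - 2 * b u v + b v v.
Proof. by rewrite bilinBl !bilinBr (bilinC v u); ring. Qed.

Lemma bilin_diff2 x0 x1 x2 :
  b (x2 - 2 *: x1 + x0) (x2 - x0)
  = b (x2 - x1) (x2 - x1) - b (x1 - x0) (x1 - x0).
Proof.
have -> : x2 - 2 *: x1 + x0 = (x2 - x1) - (x1 - x0).
  by rewrite scaler_nat mulr2n opprD opprB !addrA addrAC.
have -> : x2 - x0 = (x2 - x1) + (x1 - x0) by rewrite addrA subrK.
by rewrite bilinC bilin_polar.
Qed.

End SymBilinear.

Section PairForms.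
Variables (R : comNzRingType) (F V1 V2 : lmodType R) (b : F -> F -> R).
Hypothesis bS : sym_bilinear b.
Variables (S1 : V1 -> F) (S2 : V2 -> F).

Lemma pform_pair u1 u2 w1 w2 :
  pform b S1 S1 u1 w1 + pform b S2 S1 u2 w1 + pform b S1 S2 u1 w2
    + pform b S2 S2 u2 w2
  = b (S1 u1 + S2 u2) (S1 w1 + S2 w2).
Proof. by rewrite /pform bilinDl // !bilinDr //; ring. Qed.

Lemma pnorm2E w1 w2 :
  pnorm2 b S1 S2 w1 w2 = b (S1 w1 + S2 w2) (S1 w1 + S2 w2).
Proof. exact: pform_pair. Qed.

End PairForms.

Section LinearPair.
Variables (R : pzRingType) (V1 V2 F : lmodType R).
Variables (S1 : {linear V1 -> F}) (S2 : {linear V2 -> F}).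

Lemma linear_pairD u u' v v' :
  S1 (u + u') + S2 (v + v') = (S1 u + S2 v) + (S1 u' + S2 v').
Proof. by rewrite !linearD addrACA. Qed.

Lemma linear_pairB u u' v v' :
  S1 (u - u') + S2 (v - v') = (S1 u + S2 v) - (S1 u' + S2 v').
Proof. by rewrite !linearB addrACA opprD. Qed.

Lemma linear_pair_diff2 u0 u1 u2 v0 v1 v2 :
  S1 (u2 - 2 *: u1 + u0) + S2 (v2 - 2 *: v1 + v0)
  = (S1 u2 + S2 v2) - 2 *: (S1 u1 + S2 v1) + (S1 u0 + S2 v0).
Proof. by rewrite scalerDr linear_pairD linear_pairB !linearZ. Qed.

End LinearPair.

Section StaggerEnergy.
Variables (R : comNzRingType) (F : lmodType R) (b : F -> F -> R).
Hypothesis bS : sym_bilinear b.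
Variables (p q : nat -> F).

Definition stagger_energy n :=
  b (p n.+1 + q n) (p n.+1 + q n) + b (p n + q n.+1) (p n + q n.+1)
  - b (q n.+1 - q n) (q n.+1 - q n).

Lemma stagger_energy_step n :
  stagger_energy n.+1 - stagger_energy n
  = b (p n.+2 + p n) (p n.+2 - p n)
    + 2 * (b (q n.+1) (p n.+2 - p n) + b (p n.+1) (q n.+2 - q n)
           + b (q n.+1) (q n.+2 - q n)).
Proof.
rewrite /stagger_energy !bilin_sqrB // !bilin_sqrD //.
rewrite bilin_polar // !bilinBr //.
rewrite (bilinC bS (q n.+1) (p n.+2)) (bilinC bS (q n.+1) (p n)).
by rewrite (bilinC bS (q n.+1) (q n.+2)); ring.
Qed.

End StaggerEnergy.

(* With x, y, p, q as in the header, [wave_energy n] is E^{n+1/2} and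
   [wave_residual n] is the sum of the two equations at step n tested with
   W_j = U_j^{n+1} - U_j^{n-1}. *)
Section WaveEnergy.
Variables (R : fieldType) (F : lmodType R) (m a : F -> F -> R).
Hypotheses (mS : sym_bilinear m) (aS : sym_bilinear a).
Hypothesis two_neq0 : (2 : R) != 0.
Variables (tau : R) (x y p q : nat -> F).

Definition wave_energy n :=
  2 / tau ^+ 2 * m (x n.+1 - x n) (x n.+1 - x n)
  + a (y n.+1) (y n.+1) + a (y n) (y n) + stagger_energy a p q n.

Definition wave_residual n :=
  1 / tau ^+ 2 * m (x n.+1 - 2 *: x n + x n.-1) (x n.+1 - x n.-1)
  + 1 / 2 * a (y n.+1 + y n.-1) (y n.+1 - y n.-1)
  + 1 / 2 * a (p n.+1 + p n.-1) (p n.+1 - p n.-1)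
  + a (q n) (p n.+1 - p n.-1) + a (p n) (q n.+1 - q n.-1)
  + a (q n) (q n.+1 - q n.-1).

Lemma wave_energy_step n :
  wave_energy n.+1 - wave_energy n = 2 * wave_residual n.+1.
Proof.
rewrite /wave_energy.
rewrite -[stagger_energy a p q n.+1](subrK (stagger_energy a p q n)).
rewrite stagger_energy_step // /wave_residual /= bilin_diff2 // !bilin_polar //.
(* abstracting 1/tau^2 keeps [field] from asking for tau != 0 *)
by rewrite !mul1r; set k := (tau ^+ 2)^-1; field.
Qed.

End WaveEnergy.

HB.instance Definition _ (R : nzRingType) (V F : lmodType R)
    (T0 T1 : {linear V -> F}) :=
  GRing.Linear.copy (Tsum T0 T1) (T0 \+ T1).

Theorem theorem1 (R : realFieldType) (F : lmodType R)
  (a l2 : F -> F -> R)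
  (ha : sym_bilinear a) (ha0 : psd a)
  (hl2 : sym_bilinear l2) (hl20 : psd l2)
  (V1 V2 : vectType R)
  (T10 T11 : {linear V1 -> F}) (T20 T21 : {linear V2 -> F})
  (tau : R) (htau : 0 < tau)
  (U1 : nat -> V1) (U2 : nat -> V2) :
  let T1 := Tsum T10 T11 in
  let T2 := Tsum T20 T21 in
  (forall n, (1 <= n)%N ->
    forall W1 : V1,
      1 / tau ^+ 2 * pform l2 T1 T1 (U1 n.+1 - 2 *: U1 n + U1 n.-1) W1
    + 1 / tau ^+ 2 * pform l2 T2 T1 (U2 n.+1 - 2 *: U2 n + U2 n.-1) W1
    + 1 / 2 * pform a T11 T11 (U1 n.+1 + U1 n.-1) W1
    + pform a T21 T11 (U2 n) W1
    + 1 / 2 * pform a T10 T10 (U1 n.+1 + U1 n.-1) W1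
    + 1 / 2 * pform a T20 T10 (U2 n.+1 + U2 n.-1) W1 = 0) ->
  (forall n, (1 <= n)%N ->
    forall W2 : V2,
      1 / tau ^+ 2 * pform l2 T2 T2 (U2 n.+1 - 2 *: U2 n + U2 n.-1) W2
    + 1 / tau ^+ 2 * pform l2 T1 T2 (U1 n.+1 - 2 *: U1 n + U1 n.-1) W2
    + pform a T11 T21 (U1 n) W2
    + pform a T21 T21 (U2 n) W2
    + 1 / 2 * pform a T10 T20 (U1 n.+1 + U1 n.-1) W2
    + 1 / 2 * pform a T20 T20 (U2 n.+1 + U2 n.-1) W2 = 0) ->
  forall n, (1 <= n)%N ->
    energy a l2 T10 T11 T20 T21 tau U1 U2 n =
    energy a l2 T10 T11 T20 T21 tau U1 U2 n.-1.
Proof.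
move=> T1 T2 scheme1 scheme2 [|n] // _.
pose x k := T1 (U1 k) + T2 (U2 k).
pose y k := T10 (U1 k) + T20 (U2 k).
pose p k := T11 (U1 k).
pose q k := T21 (U2 k).
have energyE k :
    energy a l2 T10 T11 T20 T21 tau U1 U2 k = wave_energy l2 a tau x y p q k.
  rewrite /wave_energy /stagger_energy !addrA /energy !pnorm2E //.
  by rewrite linear_pairB /pform linearB.
have residual0 : wave_residual l2 a tau x y p q n.+1 = 0.
  rewrite -(addr0 0) -{1}(scheme1 n.+1 isT (U1 n.+2 - U1 n)).
  rewrite -(scheme2 n.+1 isT (U2 n.+2 - U2 n)).
  rewrite /wave_residual /= /x /y /p /q.
  rewrite -linear_pair_diff2 -!linear_pairB -linear_pairD -linearD -!linearB.
  rewrite -(pform_pair hl2) -(pform_pair ha).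
  rewrite /pform; ring.
have two_neq0 : (2 : R) != 0 by rewrite pnatr_eq0.
apply/eqP; rewrite -subr_eq0 !energyE.
by rewrite (wave_energy_step hl2 ha two_neq0) residual0 mulr0.
Qed.
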